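(* Let $G$ be a finite group and let $V=\{1,v_1,v_2,v_3\}$ be a four-group acting on $G$ by automorphisms with $C_G(V)=1$. Put $G_3=C_G(v_3)$. Suppose that $N$ is a normal subgroup of $G$ such that $N\leq G_3$. Then $N\leq Z(G)$.
   Context: $C_G(V)$ is the subgroup of elements fixed by all of $V$, $C_G(v_3)$ the subgroup fixed by $v_3$, and $Z(G)$ the center of $G$. *)

From mathcomp Require Import all_boot all_fingroup all_solvable.
Set Implicit Arguments.
Unset Strict Implicit.
Unset Printing Implicit Defensive.

From mathcomp Require Import all_boot all_fingroup all_solvable.
Set Implicit Arguments.
Unset Strict Implicit.
Unset Printing Implicit Defensive.
Local Open Scope group_scope.

(* Let K be the largest normal subgroup of G contained in C_G(v3); it contains
   N and is V-invariant because V is abelian.  An element of V outside {1, v3}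
   has no nontrivial fixed point in K (it would be fixed by all of V), so it
   inverts K.  Hence every a in V acts on K compatibly with conjugation by G,
   which forces [g, a] to centralise K: V acts trivially on the cosets of
   C_G(K).  As V is a 2-group and G has odd order, each such coset contains a
   V-fixed point, which can only be 1.  So C_G(K) = G, i.e. K <= Z(G). *)

Lemma gcore_conjP (gT : finGroupType) (A : {set gT}) (G : {group gT}) x :
  reflect {in G, forall g, x ^ g \in A} (x \in gcore A G).
Proof.
apply: (iffP bigcapP) => Ax g Gg; first by rewrite -mem_conjgV Ax ?groupV.
by rewrite mem_conjg Ax ?groupV.
Qed.

Lemma acts_stable (aT : finGroupType) (D : {group aT}) (T : finType)
    (to : action D T) (A : {set aT}) (S : {set T}) :
  A \subset D -> {in S & A, forall x a, to x a \in S} -> [acts A, on S | to].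
Proof.
move=> sAD stS; apply/subsetP => a Aa; rewrite !inE (subsetP sAD) //=.
by apply/subsetP => x Sx; rewrite inE stS.
Qed.

Lemma card4_subgroup_eq (aT : finGroupType) (V H : {group aT}) a b :
    #|V| = 4 -> H \subset V -> a \in H -> b \in H ->
  a != 1 -> b != 1 -> a != b -> H :=: V.
Proof.
move=> oV sHV Ha Hb a1 b1 ab; apply/eqP; rewrite eqEcard sHV oV.
have s1abH : 1 |: (a |: [set b]) \subset H.
  by rewrite !subUset !sub1set group1 Ha Hb.
have := subset_leq_card s1abH; have := cardSg sHV.
rewrite oV !cardsU1 cards1 !inE (eq_sym 1 a) (eq_sym 1 b).
rewrite (negPf a1) (negPf b1) (negPf ab).
by case: #|H| => [|[|[|[|[]]]]].
Qed.

Section GroupActionStability.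
Variables (gT aT : finGroupType) (G : {group gT}) (V : {group aT}).
Variable to : groupAction V G.

Lemma acts_subgacent1 v : v \in V -> v \in 'C(V) ->
  [acts V, on 'C_(G | to)[v] | to].
Proof.
move=> Vv cVv; apply: acts_stable => // x a; rewrite !subgacent1E // !in_setI.
case/andP=> Gx /afix1P xv Va; rewrite (gact_stable to Va) Gx /=.
by apply/afix1P; rewrite -actMin // -(centP cVv) // actMin // xv.
Qed.

Lemma acts_subcent (K : {set gT}) : K \subset G -> [acts V, on K | to] ->
  [acts V, on 'C_G(K) | to].
Proof.
move=> sKG nKV; apply: acts_stable => // c a /setIP[Gc /centP cKc] Va.
rewrite inE (gact_stable to Va) Gc; apply/centP => k Kk.
have Kk' : to k a^-1 \in K by rewrite (acts_act nKV) ?groupV.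
have Gk' := subsetP sKG _ Kk'.
by rewrite -(actKVin to Va k) /commute -!gactM // cKc.
Qed.

End GroupActionStability.

Section FixedPointFreeTwoGroup.
Variables (gT aT : finGroupType) (G : {group gT}) (V : {group aT}).
Variable to : groupAction V G.
Hypothesis pV : 2.-group V.
Hypothesis CGV1 : 'C_(G | to)(V) = 1.

Lemma odd_acts_fixfree (S : {set gT}) :
  S \subset G -> [acts V, on S | to] -> odd #|S| = (1 \in S).
Proof.
move=> sSG nSV; have := pgroup_fix_mod pV nSV.
have -> : 'Fix_(S | to)(V) = S :&: [1].
  by rewrite -CGV1 subgacentE // setIA (setIidPl sSG).
move/(congr1 odd); rewrite !odd_mod // => ->.
case: (boolP (1 \in S)) => S1; first by rewrite (setIidPr _) ?sub1set ?cards1.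
by move: S1; rewrite -disjoints1 -setI_eq0 setIC => /eqP->; rewrite cards0.
Qed.

Lemma odd_fixfree : odd #|G|.
Proof.
by case: (gacts_range to (subxx V)) => nGV _; rewrite odd_acts_fixfree.
Qed.

Lemma sub_trivial_mod_action (C : {group gT}) :
    C \subset G -> [acts V, on C | to] ->
    {in G & V, forall g a, to g a * g^-1 \in C} ->
  G \subset C.
Proof.
move=> sCG nCV trivGC; apply/subsetP => g Gg.
have sCgG : C :* g \subset G by rewrite mul_subG ?sub1set.
have nCgV : [acts V, on C :* g | to].
  apply: acts_stable => // x a; rewrite mem_rcoset => Cxg Va.
  have Gxg := subsetP sCG _ Cxg.
  rewrite mem_rcoset -(mulgKV g x) gactM // -mulgA.
  by rewrite groupM ?trivGC // (acts_act nCV).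
have : odd #|C :* g| by rewrite card_rcoset (oddSg sCG) ?odd_fixfree.
by rewrite odd_acts_fixfree // mem_rcoset mul1g groupV.
Qed.

End FixedPointFreeTwoGroup.

Section FixedPointFreeFourGroup.
Variables (gT aT : finGroupType) (G : {group gT}) (V : {group aT}).
Variable to : groupAction V G.
Hypothesis oV : #|V| = 4.
Hypothesis CGV1 : 'C_(G | to)(V) = 1.

Lemma fixed_by_two_eq1 z a b : z \in G -> a \in V -> b \in V ->
  a != 1 -> b != 1 -> a != b -> to z a = z -> to z b = z -> z = 1.
Proof.
move=> Gz Va Vb a1 b1 ab za zb.
have sabV : [set a; b] \subset V by rewrite subUset !sub1set Va.
have defV : <<[set a; b]>> :=: V.
  by apply: card4_subgroup_eq ab; rewrite ?gen_subG ?mem_gen ?set21 ?set22.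
have : z \in 'Fix_to(<<[set a; b]>>).
  by rewrite afix_gen_in //; apply/afixP => c /set2P[]->.
by rewrite defV => FVz; apply/set1gP; rewrite -CGV1 subgacentE // inE Gz.
Qed.

End FixedPointFreeFourGroup.

Section CoreOfCentraliser.
Variables (gT aT : finGroupType) (G : {group gT}) (V : {group aT}).
Variable to : groupAction V G.
Variable v3 : aT.
Hypothesis oV : #|V| = 4.
Hypothesis Vsq : forall v, v \in V -> v ^+ 2 = 1.
Hypothesis Vv3 : v3 \in V.
Hypothesis v3n1 : v3 != 1.
Hypothesis CGV1 : 'C_(G | to)(V) = 1.

Local Notation K := (gcore 'C_(G | to)[v3] G).

Lemma abelianV : abelian V.
Proof. by apply/abelem_abelian/exponent2_abelem/exponentP. Qed.

Lemma gcore_subG : K \subset G.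
Proof. exact: subset_trans (gcore_sub _ _) (subsetIl _ _). Qed.

Lemma gcore_fix1 x : x \in K -> to x v3 = x.
Proof.
move/(subsetP (gcore_sub _ _)); rewrite subgacent1E // in_setI.
by case/andP=> _ /afix1P.
Qed.

Lemma acts_gcore : [acts V, on K | to].
Proof.
have nCV := acts_subgacent1 to Vv3 (subsetP abelianV _ Vv3).
apply: acts_stable => // x a Kx Va; apply/gcore_conjP => g Gg.
have Gx := subsetP gcore_subG _ Kx.
have Gg' : to g a^-1 \in G by rewrite (gact_stable to) ?groupV.
rewrite -(actKVin to Va g) -gactJ // (acts_act nCV) //.
by move/gcore_conjP: Kx; apply.
Qed.

Lemma gcore_inv w :
  w \in V -> w != 1 -> w != v3 -> {in K, forall k, to k w = k^-1}.
Proof.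
move=> Vw w1 w3; have KG := subsetP gcore_subG.
have KwK x : x \in K -> to x w \in K.
  by move=> Kx; rewrite (acts_act acts_gcore).
(* x |-> x^-1 x^w is injective on K, hence onto: each k is x^-1 x^w. *)
pose f x := x^-1 * to x w.
have f_inj : {in K &, injective f}.
  move=> x y Kx Ky fxy.
  have ywx : to y w = y * x^-1 * to x w.
    by rewrite -mulgA /f in fxy *; rewrite fxy mulKVg.
  have Kyx : y * x^-1 \in K by rewrite groupM ?groupV.
  have wyx : to (y * x^-1) w = y * x^-1.
    by rewrite gactM ?groupV ?KG // gactV ?KG // ywx mulgK.
  have := fixed_by_two_eq1 oV CGV1 (KG _ Kyx) Vw Vv3 w1 v3n1 w3 wyx.
  by move/(_ (gcore_fix1 Kyx))/eqP; rewrite -eq_mulgV1 eq_sym => /eqP.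
have fK : f @: K = K.
  apply/eqP; rewrite eqEcard card_in_imset // leqnn andbT.
  by apply/subsetP => _ /imsetP[x Kx ->]; rewrite groupM ?groupV ?KwK.
move=> k; rewrite -fK => /imsetP[x Kx ->]; have Gx := KG _ Kx.
have ww : w * w = 1 by rewrite -(expgS w 1) Vsq.
rewrite /f gactM ?groupV ?(gact_stable to) // gactV // -actMin // ww act1.
by rewrite invMg invgK.
Qed.

Lemma gcore_actJ a k g :
  a \in V -> k \in K -> g \in G -> to (k ^ g) a = to k a ^ g.
Proof.
move=> Va Kk Gg.
have Kkg : k ^ g \in K by rewrite memJ_norm ?(subsetP (gcore_norm _ _)).
have [-> | a1] := eqVneq a 1; first by rewrite !act1.
have [-> | a3] := eqVneq a v3; first by rewrite !gcore_fix1.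
by rewrite !gcore_inv // conjVg.
Qed.

Lemma act_mulV_subcent a g : a \in V -> g \in G -> to g a * g^-1 \in 'C_G(K).
Proof.
move=> Va Gg; rewrite inE groupM ?groupV ?(gact_stable to) //=.
apply/centP => k Kk.
have Kk' : to k a^-1 \in K by rewrite (acts_act acts_gcore) ?groupV.
have conj_eq : k ^ to g a = k ^ g.
  by rewrite -(actKVin to Va k) -gactJ ?gcore_actJ // (subsetP gcore_subG).
by apply: commute_sym; apply/commgP/conjg_fixP; rewrite conjgM conj_eq conjgK.
Qed.

Lemma gcore_sub_center : K \subset 'Z(G).
Proof.
have pV : 2.-group V by rewrite /pgroup oV.
have sGC : G \subset 'C_G(K).
  apply: (sub_trivial_mod_action (C := 'C_G(K)%G) pV CGV1).
  - exact: subsetIl.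
  - exact: acts_subcent gcore_subG acts_gcore.
  by move=> g a Gg Va; apply: act_mulV_subcent.
by rewrite subsetI gcore_subG centsC (subset_trans sGC) ?subsetIr.
Qed.

End CoreOfCentraliser.

Theorem lemma4p8 (gT aT : finGroupType) (G : {group gT}) (V : {group aT})
    (to : groupAction V G) (v3 : aT) (N : {group gT}) :
  #|V| = 4%N ->
  (forall v, v \in V -> v ^+ 2 = 1) ->
  v3 \in V -> v3 != 1 ->
  'C_(G | to)(V) = 1 ->
  N <| G ->
  N \subset 'C_(G | to)[v3] ->
  N \subset 'Z(G).
Proof.
move=> oV Vsq Vv3 v3n1 CGV1 /andP[_ nNG] sNC.
exact: subset_trans (gcore_max sNC nNG) (gcore_sub_center oV Vsq Vv3 v3n1 CGV1).
Qed.
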